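(* Let $v_1,\ldots,v_r\in\mathbb{Z}^n$ with $\sum_{i=1}^r v_i=0$ and $\mathbf{a}=(a_1,\ldots,a_r)\in\mathbb{Z}^r$ be such that $P=\bigcap_{i=1}^r\{x\in\mathbb{R}^n : \langle v_i,x\rangle+a_i\ge 0\}$ is compact and each hyperplane $H_i=\{x:\langle v_i,x\rangle+a_i=0\}$ meets $P$. Then the function $\phi_{\mathbf{a}}:P\to\mathbb{R}_{>0}$, $\phi_{\mathbf{a}}(x)=\prod_{i=1}^r(\langle v_i,x\rangle+a_i)^{\langle v_i,x\rangle+a_i}$ (with $0^0=1$), is convex on $P$, and there is a unique point $m_{\mathbf{a}}$ in the relative interior of $P$ minimizing $\phi_{\mathbf{a}}$.
   Context: The relative interior of $P$ is the interior of $P$ viewed as a subset of the affine span of $P$. *)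

From HB Require Import structures.
From mathcomp Require Import all_boot all_order all_algebra.
From mathcomp Require Import all_classical all_reals all_analysis.
Set Implicit Arguments. Unset Strict Implicit. Unset Printing Implicit Defensive.
Import Order.TTheory GRing.Theory Num.Theory.
Import numFieldNormedType.Exports.
Local Open Scope classical_set_scope.
Local Open Scope ring_scope.

Definition lform (R : realType) (n r : nat) (v : 'I_r -> 'I_n -> int)
  (a : 'I_r -> int) (i : 'I_r) (x : 'rV[R]_n) : R :=
  \sum_(j < n) (v i j)%:~R * x 0 j + (a i)%:~R.

Definition Ppolytope (R : realType) (n r : nat) (v : 'I_r -> 'I_n -> int)
  (a : 'I_r -> int) : set 'rV[R]_n :=
  [set x | forall i, 0 <= lform v a i x].

(* phi_a(x) = prod_i l_i(x)^{l_i(x)}, with powR satisfying 0 `^ 0 = 1 *)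
Definition phi_a (R : realType) (n r : nat) (v : 'I_r -> 'I_n -> int)
  (a : 'I_r -> int) (x : 'rV[R]_n) : R :=
  \prod_(i < r) (lform v a i x) `^ (lform v a i x).

Definition convex_on (R : realType) (n : nat) (S : set 'rV[R]_n)
  (f : 'rV[R]_n -> R) : Prop :=
  forall x y t, S x -> S y -> 0 <= t <= 1 ->
    f (t *: x + (1 - t) *: y) <= t * f x + (1 - t) * f y.

Definition affine_hull (R : realType) (n : nat) (S : set 'rV[R]_n)
  : set 'rV[R]_n :=
  [set x | exists (k : nat) (c : 'I_k -> R) (p : 'I_k -> 'rV[R]_n),
     (forall l, S (p l)) /\ \sum_(l < k) c l = 1 /\
     x = \sum_(l < k) c l *: p l].

Definition relint (R : realType) (n : nat) (S : set 'rV[R]_n)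
  : set 'rV[R]_n :=
  [set x | S x /\ exists e : R, 0 < e /\
     forall y, affine_hull S y -> `|y - x| < e -> S y].

From HB Require Import structures.
From mathcomp Require Import all_boot all_order all_algebra.
From mathcomp Require Import all_classical all_reals all_analysis.
From mathcomp Require Import ring lra.
Import Order.TTheory GRing.Theory Num.Theory.
Import numFieldNormedType.Exports.
Local Open Scope classical_set_scope.
Local Open Scope ring_scope.

(* With l_i x = <v_i, x> + a_i, we have phi_a = expR (\sum_i xlnx (l_i x)) where
   xlnx t = t ln t is convex, so phi_a is convex and attains its minimum on the
   compact polytope P at some m. Since xlnx has slope -oo at 0, if l_i m = 0
   while l_i > 0 somewhere on P, moving from m towards that point strictly
   decreases the sum; hence each l_i is either positive at m or vanishes on P,
   and so on its affine span, which puts m in the relative interior. Strict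
   convexity of xlnx forces two minimizers to agree on every l_i; P then
   contains the whole line through them, impossible for a bounded set. *)

Section XlnX.
Context {R : realType}.
Implicit Types a b s t x z : R.

(* [ln] vanishes on [t <= 0], so [xlnx 0 = 0], matching [0 `^ 0 = 1]. *)
Definition xlnx t : R := t * ln t.

Lemma ln_lt_subr1 z : 0 < z -> z != 1 -> ln z < z - 1.
Proof.
move=> z0 z1; have := @expR_gt1Dx R (ln z).
by rewrite lnK ?posrE // ln_eq0 // z1 => /(_ isT); lra.
Qed.

Lemma xlnx_tangent_lt a x : 0 <= a -> 0 < x -> a != x -> a - x < a * (ln a - ln x).
Proof.
move=> a0 x0 ax; have [->|an0] := eqVneq a 0; first by rewrite mul0r; lra.
have a_gt0 : 0 < a by rewrite lt_def an0.
have xa1 : x / a != 1 by rewrite (can2_eq (divfK an0) (mulfK an0)) mul1r eq_sym.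
have := ln_lt_subr1 _ (divr_gt0 x0 a_gt0) xa1.
rewrite ln_div ?posrE // -(ltr_pM2l a_gt0) mulrBr [_ * (_ - 1)]mulrBr.
by rewrite mulr1 mulrCA divff // mulr1; lra.
Qed.

Lemma xlnx_tangent_le a x : 0 <= a -> 0 < x -> a - x <= a * (ln a - ln x).
Proof.
move=> a0 x0; have [->|ax] := eqVneq a x; first by rewrite !subrr mulr0.
exact/ltW/xlnx_tangent_lt.
Qed.

(* The bracketed terms are the tangent-line gaps of [xlnx] at the barycenter [x]. *)
Let xlnx_conv_gapE a b t (x := t * a + (1 - t) * b) :
  t * xlnx a + (1 - t) * xlnx b - xlnx x =
  t * (a * (ln a - ln x) - (a - x)) + (1 - t) * (b * (ln b - ln x) - (b - x)).
Proof. by rewrite /x /xlnx; ring. Qed.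

Lemma xlnx_convex a b t : 0 <= a -> 0 <= b -> 0 <= t <= 1 ->
  xlnx (t * a + (1 - t) * b) <= t * xlnx a + (1 - t) * xlnx b.
Proof.
move=> a0 b0 /andP[t0 t1]; rewrite -subr_ge0 xlnx_conv_gapE.
set x := t * a + (1 - t) * b.
have ta0 : 0 <= t * a by rewrite mulr_ge0.
have tb0 : 0 <= (1 - t) * b by rewrite mulr_ge0 // subr_ge0.
have [x0|xn0] := eqVneq x 0.
  have ta : t * a = 0 by rewrite /x in x0; lra.
  have tb : (1 - t) * b = 0 by rewrite /x in x0; lra.
  by rewrite !mulrBr !mulrA ta tb x0 !mul0r !mulr0 !subrr addr0.
have x_gt0 : 0 < x by rewrite lt_def xn0 addr_ge0.
by apply: addr_ge0; apply: mulr_ge0; rewrite ?subr_ge0 ?xlnx_tangent_le.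
Qed.

Lemma xlnx_strict_convex a b t : 0 <= a -> 0 <= b -> 0 < t < 1 -> a != b ->
  xlnx (t * a + (1 - t) * b) < t * xlnx a + (1 - t) * xlnx b.
Proof.
move=> a0 b0 /andP[t0 t1] ab; rewrite -subr_gt0 xlnx_conv_gapE.
set x := t * a + (1 - t) * b.
have xa : a != x.
  apply: contra ab => /eqP axE.
  have : (1 - t) * (b - a) == 0 by apply/eqP; rewrite /x in axE; lra.
  by rewrite mulf_eq0 subr_eq0 eq_sym => /orP[/eqP|//]; lra.
have x_gt0 : 0 < x.
  rewrite /x; have [a_eq0|an0] := eqVneq a 0.
    by rewrite a_eq0 mulr0 add0r mulr_gt0 ?subr_gt0 // lt_def b0 andbT eq_sym -a_eq0.
  have : 0 < t * a by rewrite mulr_gt0 // lt_def an0.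
  have : 0 <= (1 - t) * b by rewrite mulr_ge0 // subr_ge0 ltW.
  lra.
have : 0 < t * (a * (ln a - ln x) - (a - x)) by rewrite mulr_gt0 // subr_gt0 xlnx_tangent_lt.
have : 0 <= (1 - t) * (b * (ln b - ln x) - (b - x)).
  by apply: mulr_ge0; rewrite subr_ge0; [exact: ltW | exact: xlnx_tangent_le].
lra.
Qed.

Lemma xlnxM s t : 0 < s -> 0 <= t -> xlnx (s * t) = s * xlnx t + s * t * ln s.
Proof.
move=> s0 t0; rewrite /xlnx; have [->|tn0] := eqVneq t 0.
  by rewrite !(mulr0, mul0r) addr0.
have t_gt0 : 0 < t by rewrite lt_def tn0.
by rewrite lnM ?posrE //; ring.
Qed.

(* With [y = - ln t]: [|xlnx t| = y / expR y <= y / (1 + y^2/2)]. *)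
Lemma normr_xlnx_lt e t : 0 < e -> 0 < t -> t < expR (- (2 / e)) -> `|xlnx t| < e.
Proof.
move=> e0 t0 te; set y := - ln t.
have y_gt : 2 / e < y by rewrite /y ltrNr -ltr_expR lnK ?posrE.
have y0 : 0 < y by apply: lt_trans y_gt; rewrite divr_gt0.
have tE : t = expR (- y) by rewrite /y opprK lnK ?posrE.
have -> : xlnx t = - (y / expR y) by rewrite /xlnx tE expRK expRN mulrN mulrC.
rewrite normrN ger0_norm ?divr_ge0 ?expR_ge0 ?ltW // ltr_pdivrMr ?expR_gt0 //.
apply: (lt_le_trans _ (ler_wpM2l (ltW e0) (expR_ge1Dxn 1 (ltW y0)))).
have : 2 < y * e by rewrite -ltr_pdivrMr.
rewrite (_ : 2`!%:R = 2 :> R) //; nra.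
Qed.

Lemma continuous_xlnx : continuous xlnx.
Proof.
move=> x; have [->|x0] := eqVneq x 0.
  apply/cvgrPdist_lt => e e0; rewrite /xlnx mul0r.
  near=> t; rewrite sub0r normrN.
  have [t0|t_gt0] := leP t 0; first by rewrite ln0 // mulr0 normr0.
  apply: normr_xlnx_lt => //; near: t.
  exact: lt_nbhsl (expR_gt0 _).
apply: cvgM; first exact: cvg_id.
have [x_lt0|x_gt0] := ltP x 0; last by apply: continuous_ln; rewrite lt_def x0.
apply: (@near_cst_continuous _ _ 0); near=> t; apply: ln0; near: t.
by apply: filterS (lt_nbhsl x_lt0) => t /ltW.
Unshelve. all: by end_near. Qed.

Lemma powR_self t : t `^ t = expR (xlnx t).
Proof. by rewrite /powR /xlnx; case: eqP => [->|//]; rewrite mul0r expR0. Qed.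

Lemma expR_convex x y t : 0 <= t -> t <= 1 ->
  expR (t * x + (1 - t) * y) <= t * expR x + (1 - t) * expR y.
Proof. by move=> t0 t1; have := convex_expR (Itv01 t0 t1) x y; rewrite !convRE. Qed.

End XlnX.

Section SumXlnxOfAffineForms.
Context {R : realType} {V : lmodType R} {r : nat} {l : 'I_r -> V -> R}.
Hypothesis l_conv : forall i x y t,
  l i (t *: x + (1 - t) *: y) = t * l i x + (1 - t) * l i y.

Local Notation P := [set x | forall i, 0 <= l i x].

Definition sum_xlnx (x : V) : R := \sum_(i < r) xlnx (l i x).

Lemma nonneg_forms_convex {x y t} : P x -> P y -> 0 <= t <= 1 ->
  P (t *: x + (1 - t) *: y).
Proof.
move=> Px Py /andP[t0 t1] i; rewrite l_conv.
by apply: addr_ge0; apply: mulr_ge0; rewrite ?subr_ge0.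
Qed.

Lemma sum_xlnx_convex {x y t} : P x -> P y -> 0 <= t <= 1 ->
  sum_xlnx (t *: x + (1 - t) *: y) <= t * sum_xlnx x + (1 - t) * sum_xlnx y.
Proof.
move=> Px Py t01; rewrite /sum_xlnx !mulr_sumr -big_split /=.
by apply: ler_sum => i _; rewrite l_conv xlnx_convex.
Qed.

Lemma sum_xlnx_strict_convex {x y t j} : P x -> P y -> 0 < t < 1 -> l j x != l j y ->
  sum_xlnx (t *: x + (1 - t) *: y) < t * sum_xlnx x + (1 - t) * sum_xlnx y.
Proof.
move=> Px Py t01 lxy; have /andP[t0 t1] := t01.
have t01' : 0 <= t <= 1 by rewrite !ltW.
rewrite /sum_xlnx !mulr_sumr -big_split /= (bigD1 j) // [ltRHS](bigD1 j) //= l_conv.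
apply: ltr_leD; first exact: xlnx_strict_convex.
by apply: ler_sum => i _; rewrite l_conv xlnx_convex.
Qed.

(* Along a segment leaving the facet [l i = 0], the [i]-th term contributes
   [t * b * ln t] with [b = l i q > 0], whose slope at [t = 0+] is [-oo]. *)
Lemma sum_xlnx_leave_facet {i q m t} : P q -> P m -> l i m = 0 -> 0 < t <= 1 ->
  sum_xlnx (t *: q + (1 - t) *: m) <=
  t * sum_xlnx q + (1 - t) * sum_xlnx m + t * l i q * ln t.
Proof.
move=> Pq Pm lm0 /andP[t0 t1]; have t01 : 0 <= t <= 1 by rewrite ltW.
rewrite /sum_xlnx !mulr_sumr -big_split /= (bigD1 i) // [X in _ <= X + _](bigD1 i) //=.
rewrite -addrA [_ + t * _ * _]addrC addrA l_conv lm0 mulr0 addr0 xlnxM ?Pq //.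
have xlnx0 : xlnx 0 = 0 :> R by rewrite /xlnx mul0r.
rewrite xlnx0 mulr0 addr0; apply: lerD => //.
by apply: ler_sum => j _; rewrite l_conv xlnx_convex.
Qed.

Section Minimizer.
Context {m : V}.
Hypotheses (Pm : P m) (m_min : forall x, P x -> sum_xlnx m <= sum_xlnx x).

Lemma argmin_form_pos_or_vanish i : 0 < l i m \/ (forall x, P x -> l i x = 0).
Proof.
have [lm_gt0|lm_le0] := ltP 0 (l i m); [by left | right].
have lm0 : l i m = 0 by apply/le_anti; rewrite lm_le0 Pm.
move=> q Pq; apply/le_anti; rewrite Pq andbT leNgt; apply/negP => lq_gt0.
set G := sum_xlnx q - sum_xlnx m.
have G0 : 0 <= G by rewrite subr_ge0 m_min.
(* [t] is chosen so that the facet term [t * l i q * ln t] equals [- t * (G + 1)]. *)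
set t := expR (- ((G + 1) / l i q)).
have t0 : 0 < t by apply: expR_gt0.
have t1 : t <= 1 by rewrite expR_le1 oppr_le0 divr_ge0 // ?ltW //; lra.
have lnt : l i q * ln t = - (G + 1) by rewrite expRK mulrN mulrC divfK ?gt_eqF.
have := sum_xlnx_leave_facet Pq Pm lm0 (introT andP (conj t0 t1)).
rewrite -mulrA lnt.
have := m_min _ (nonneg_forms_convex Pq Pm (introT andP (conj (ltW t0) t1))).
rewrite /G in G0 lnt *; nra.
Qed.

Lemma argmin_forms_unique {m'} : P m' -> (forall x, P x -> sum_xlnx m' <= sum_xlnx x) ->
  forall i, l i m' = l i m.
Proof.
move=> Pm' m'_min i; apply/eqP/negP => /negP lm'm.
have half : 0 < (2^-1 : R) < 1 by apply/andP; split; lra.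
have half' : 0 <= (2^-1 : R) <= 1 by apply/andP; split; lra.
have := sum_xlnx_strict_convex Pm' Pm half lm'm.
have := m_min _ (nonneg_forms_convex Pm' Pm half').
have := m_min _ Pm'; have := m'_min _ Pm; lra.
Qed.

End Minimizer.

Lemma same_forms_line {x y} : P x -> (forall i, l i y = l i x) ->
  forall s, P (s *: y + (1 - s) *: x).
Proof. by move=> Px lyx s i; rewrite l_conv lyx -mulrDl subrKC mul1r. Qed.

End SumXlnxOfAffineForms.

Arguments sum_xlnx {R V r} l x.

Lemma bounded_set_line_eq {R : realType} {V : normedModType R} {A : set V} {x y : V} :
  bounded_set A -> (forall s : R, A (s *: y + (1 - s) *: x)) -> y = x.
Proof.
move=> /(ex_strict_bound_gt0 (F := globally A)) [M M0 HM] Aline.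
apply/eqP; rewrite -subr_eq0; apply: contraT; rewrite -normr_gt0 => yx_gt0.
set s := (M + `|x|) / `|y - x|.
have s0 : 0 <= s by rewrite divr_ge0 // addr_ge0 // ltW.
have syxE : `|s *: (y - x)| = M + `|x| by rewrite normrZ ger0_norm // /s divfK // gt_eqF.
have := HM _ (Aline s); have := ler_normB (s *: y + (1 - s) *: x) x.
rewrite scalerBl scale1r addrCA addrAC subrr add0r -scalerBr syxE /=; lra.
Qed.

Lemma continuous_sumr {R : realType} {T : topologicalType} {k : nat} (F : 'I_k -> T -> R) :
  (forall i, continuous (F i)) -> continuous (fun x => \sum_(i < k) F i x).
Proof.
move=> Fc.
exact: (@continuous_big R 'I_k +%R 0 xpredT (@add_continuous R) _ (index_enum 'I_k) F).
Qed.

Lemma normr_mx_entry_le {R : realType} {m n : nat} (A : 'M[R]_(m, n)) i j : `|A i j| <= `|A|.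
Proof.
rewrite [leRHS]mx_normrE.
exact: (le_bigmax _ (fun ij : 'I_m * 'I_n => `|A ij.1 ij.2|) (i, j)).
Qed.

Section Polytope.
Context {R : realType} {n r : nat} (v : 'I_r -> 'I_n -> int) (a : 'I_r -> int).
Local Notation l := (lform (R := R) v a).
Local Notation P := (Ppolytope (R := R) v a).

Lemma lform_conv i (x y : 'rV[R]_n) t :
  l i (t *: x + (1 - t) *: y) = t * l i x + (1 - t) * l i y.
Proof.
rewrite /lform (eq_bigr (fun j => t * ((v i j)%:~R * x 0 j) + (1 - t) * ((v i j)%:~R * y 0 j))).
  by rewrite big_split /= -!mulr_sumr; ring.
by move=> j _; rewrite !mxE; ring.
Qed.

Lemma lform_affine_comb i k (c : 'I_k -> R) (p : 'I_k -> 'rV[R]_n) :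
  \sum_(q < k) c q = 1 -> l i (\sum_(q < k) c q *: p q) = \sum_(q < k) c q * l i (p q).
Proof.
move=> c1; rewrite /lform.
under [RHS]eq_bigr => q _ do rewrite mulrDr mulr_sumr.
rewrite big_split /= -mulr_suml c1 mul1r exchange_big /=; congr (_ + _).
by apply: eq_bigr => j _; rewrite summxE mulr_sumr; apply: eq_bigr => q _; rewrite !mxE; ring.
Qed.

Lemma lform_lipschitz i (x y : 'rV[R]_n) :
  `|l i y - l i x| <= (\sum_(j < n) `|(v i j)%:~R : R|) * `|y - x|.
Proof.
have -> : l i y - l i x = \sum_(j < n) (v i j)%:~R * (y - x) 0 j.
  rewrite /lform opprD addrACA subrr addr0 -sumrB.
  by apply: eq_bigr => j _; rewrite !mxE mulrBr.
apply: (le_trans (ler_norm_sum _ _ _)); rewrite mulr_suml; apply: ler_sum => j _.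
by rewrite normrM ler_wpM2l // normr_mx_entry_le.
Qed.

Lemma continuous_lform i : continuous (l i).
Proof.
move=> x; apply: continuousD; last exact: cst_continuous.
move: x; apply: continuous_sumr => j.
by move=> x; apply: continuousM; [exact: cst_continuous | exact: coord_continuous].
Qed.

Lemma continuous_sum_xlnx_lform : continuous (sum_xlnx l).
Proof.
apply: continuous_sumr => i x.
exact: continuous_comp (continuous_lform i x) (continuous_xlnx _).
Qed.

Lemma phi_aE x : phi_a v a x = expR (sum_xlnx l x).
Proof. by rewrite /phi_a /sum_xlnx expR_sum; apply: eq_bigr => i _; rewrite powR_self. Qed.

Lemma phi_a_convex : convex_on P (phi_a v a).
Proof.
move=> x y t Px Py t01; have /andP[t0 t1] := t01.
rewrite !phi_aE; apply: (le_trans _ (expR_convex _ _ _ t0 t1)); rewrite ler_expR.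
exact: (sum_xlnx_convex lform_conv).
Qed.

Lemma relint_Ppolytope {m} : P m ->
  (forall i, 0 < l i m \/ (forall x, P x -> l i x = 0)) -> relint P m.
Proof.
move=> Pm supp; split=> //.
pose C i := \sum_(j < n) `|(v i j)%:~R : R|.
have C0 i : 0 <= C i by apply: sumr_ge0 => j _.
have e_small_near : \forall e \near 0^'+, forall i, 0 < l i m -> C i * e < l i m.
  apply: filter_forall => i; have [lm_gt0|_] := ltP 0 (l i m); last first.
    by near=> e.
  have Ci1 : 0 < C i + 1 by have := C0 i; lra.
  near=> e => _.
  have e0 : 0 < e by near: e; exact: nbhs_right_gt.
  have : e < l i m / (C i + 1) by near: e; apply: nbhs_right_lt; rewrite divr_gt0.
  by rewrite ltr_pdivlMr //; nra.
have [e [e0 e_small]] := filter_ex (filterI (nbhs_right_gt 0) e_small_near).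
exists e; split=> // y hull_y ye i; case: (supp i) => [lm_gt0|l0].
  have := lform_lipschitz i m y; rewrite -/(C i) => lip.
  have := ler_wpM2l (C0 i) (ltW ye); have := e_small i lm_gt0.
  have := ler_norm (l i m - l i y); rewrite distrC; lra.
case: hull_y => k [c [p [Pp [c1 ->]]]]; rewrite lform_affine_comb //.
by rewrite big1 // => q _; rewrite l0 ?mulr0.
Unshelve. all: by end_near. Qed.

End Polytope.

Theorem mainTheorem2 (R : realType) (n r : nat)
  (v : 'I_r -> 'I_n -> int) (a : 'I_r -> int) :
  (forall j : 'I_n, \sum_(i < r) v i j = 0) ->
  compact (Ppolytope (R := R) v a) ->
  (forall i : 'I_r, exists x : 'rV[R]_n, Ppolytope (R := R) v a x /\ lform (R := R) v a i x = 0) ->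
  (forall x : 'rV[R]_n, Ppolytope (R := R) v a x -> 0 < phi_a (R := R) v a x) /\
  convex_on (Ppolytope (R := R) v a) (phi_a (R := R) v a) /\
  exists m : 'rV[R]_n, relint (Ppolytope (R := R) v a) m /\
    (forall x : 'rV[R]_n, Ppolytope (R := R) v a x -> phi_a (R := R) v a m <= phi_a (R := R) v a x) /\
    (forall m' : 'rV[R]_n, Ppolytope (R := R) v a m' ->
       (forall x : 'rV[R]_n, Ppolytope (R := R) v a x -> phi_a (R := R) v a m' <= phi_a (R := R) v a x) -> m' = m).
Proof.
move=> _ cP facets; set P := Ppolytope v a; pose l := lform (R := R) v a.
have lconv := @lform_conv R n r v a.
have P_nonempty : P !=set0.
  case: (posnP r) => [r0|r_gt0]; last by have [x [Px _]] := facets (Ordinal r_gt0); exists x.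
  by exists 0 => -[i i_lt]; exfalso; move: i_lt; rewrite r0.
have [m /set_mem Pm m_min] := compact_EVT_min P_nonempty cP
  (continuous_subspaceT (continuous_sum_xlnx_lform v a)).
have {}m_min x : P x -> sum_xlnx l m <= sum_xlnx l x by move=> Px; apply: m_min; rewrite inE.
split; first by move=> x _; rewrite phi_aE expR_gt0.
split; first exact: phi_a_convex.
exists m; split; first exact: (relint_Ppolytope v a Pm (argmin_form_pos_or_vanish lconv Pm m_min)).
split; first by move=> x Px; rewrite !phi_aE ler_expR m_min.
move=> m' Pm' m'_min; apply: (bounded_set_line_eq (compact_bounded cP)).
apply: (same_forms_line lconv Pm); apply: (argmin_forms_unique lconv Pm m_min Pm').
by move=> x Px; rewrite -ler_expR -!phi_aE m'_min.
Qed.
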